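(* Let $i$ be an index with $0\leq i<k$. An element $\lambda_t$ with $t>s$ is an order-$i$ seed of $\tilde\Lambda$ if and only if one of the following pairwise excluding conditions holds: (1) $\lambda_t$ is an order-$i$ seed of $\Lambda$; (2) $i<k-1$, $\lambda_t=\lambda_s+\lambda_{i+1}-\lambda_i$ and $\lambda_s$ is an order-$(i+1)$ seed of $\Lambda$; (3) $i=k-1=s-2$ and $\lambda_t=\lambda_s+\lambda_k-\lambda_{k-1}$; (4) $i=k-1=s-1$ and either $\lambda_t=\lambda_s+\lambda_k-\lambda_{k-1}$ or $\lambda_t=\lambda_s+\lambda_k-\lambda_{k-1}+1$.
   Context: A numerical semigroup is a subset $\Lambda\subseteq\mathbb{N}_0$ containing $0$, closed under addition, with finite complement; its genus $g$ is the number of gaps (elements of $\mathbb{N}_0\setminus\Lambda$). Write $\Lambda=\{\lambda_i\}_{i\geq 0}$ with $0=\lambda_0<\lambda_1<\lambda_2<\cdots$; let $k$ be the smallest index with $\lambda_i=i+g$ for all $i\geq k$, and $c=\lambda_k=k+g$ the conductor. A generator of a numerical semigroup is a non-zero element that is not the sum of two non-zero elements of it. For $i\geq 0$ let $\Lambda_i=\Lambda\setminus\{\lambda_1,\dots,\lambda_i\}$. An element $\lambda_t$ with $t\geq k$ is an order-$i$ seed of $\Lambda$ (for $0\leq i<k$) if $\lambda_t+\lambda_i$ is a generator of $\Lambda_i$. Fix an order-zero seed $\lambda_s$ of $\Lambda$ (so $s\geq k$ and $\lambda_s$ is a generator of $\Lambda$), and let $\tilde\Lambda=\Lambda\setminus\{\lambda_s\}$,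 a numerical semigroup of genus $g+1$ with elements $\tilde\lambda_i=\lambda_i$ for $i<s$, $\tilde\lambda_i=\lambda_{i+1}$ for $i\geq s$, and conductor $\lambda_s+1$. Thus an order-$i$ seed of $\tilde\Lambda$, with $0\leq i<s$, is an element $\lambda_t$ with $t>s$ such that $\lambda_t+\lambda_i$ is a generator of $\tilde\Lambda_i=\Lambda\setminus\{\lambda_1,\dots,\lambda_i,\lambda_s\}$. *)

(* A numerical semigroup is represented by the finite list G
   of its gaps: Lambda = { x : nat | x \notin G }. *)
From mathcomp Require Import all_boot.
Set Implicit Arguments. Unset Strict Implicit. Unset Printing Implicit Defensive.

Definition inS (G : seq nat) (x : nat) : Prop := x \notin G.

(* G is the gap set of a numerical semigroup: 0 in Lambda, closed under +.
   (finite complement is automatic since G is a finite list) *)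
Definition numsg (G : seq nat) : Prop :=
  inS G 0 /\ forall x y, inS G x -> inS G y -> inS G (x + y).

Definition genus (G : seq nat) : nat := size (undup G).

(* lam G i = lambda_i, the i-th element (from 0) of Lambda in increasing order.
   Among 0..i+size G there are at least i+1 elements of Lambda. *)
Definition lam (G : seq nat) (i : nat) : nat :=
  nth 0 [seq x <- iota 0 (i + size G).+1 | x \notin G] i.

Definition is_kidx (G : seq nat) (k : nat) : Prop :=
  (forall j, k <= j -> lam G j = j + genus G) /\
  (forall k', (forall j, k' <= j -> lam G j = j + genus G) -> k <= k').

Definition generator (P : nat -> Prop) (x : nat) : Prop :=
  P x /\ x <> 0 /\ ~ (exists a b, P a /\ P b /\ a <> 0 /\ b <> 0 /\ a + b = x).

Definition Lam_i (G : seq nat) (i : nat) (y : nat) : Prop :=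
  inS G y /\ forall j, 0 < j <= i -> y <> lam G j.

Definition seed (G : seq nat) (k i x : nat) : Prop :=
  exists t, k <= t /\ lam G t = x /\ generator (Lam_i G i) (x + lam G i).

From mathcomp Require Import all_boot zify.
From Stdlib Require Import Classical.
Set Implicit Arguments. Unset Strict Implicit. Unset Printing Implicit Defensive.

(* Above the conductor, lam t + lam i is itself an element lam m with m > i, so
   lam t is an order-i seed exactly when lam t + lam i is not a sum lam a + lam b
   with a, b > i; for the semigroup without lam s the indices must moreover avoid
   s.  So the new seeds are the lam t for which every such decomposition uses
   lam s, say lam t + lam i = lam s + lam c.  Above the conductor lam a + lam b
   only depends on a + b, so the decomposition can be rebalanced away from s
   unless either c = i+1, which gives condition (2) when i+1 < k and forces
   s = k or s = k+1 when i+1 = k, or i+1 = s = k and c = s+1. *)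

Definition elems_below (G : seq nat) (n : nat) : seq nat :=
  [seq x <- iota 0 n | x \notin G].

Lemma elems_below_cat (G : seq nat) (n m : nat) : n <= m ->
  elems_below G m = elems_below G n ++ [seq x <- iota n (m - n) | x \notin G].
Proof. by move=> le_nm; rewrite /elems_below -filter_cat -iotaD subnKC. Qed.

Lemma size_elems_below (G : seq nat) (n : nat) :
  n - size G <= size (elems_below G n).
Proof.
have gaps_below : count (mem G) (iota 0 n) <= size G.
  rewrite -size_filter; apply: uniq_leq_size; first exact/filter_uniq/iota_uniq.
  by move=> x; rewrite mem_filter => /andP[].
have := count_predC (mem G) (iota 0 n).
rewrite size_iota /elems_below size_filter.
have -> : count (fun x => x \notin G) (iota 0 n) = count (predC (mem G)) (iota 0 n).
  exact: eq_count.
lia.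
Qed.

Lemma lamE (G : seq nat) (i n : nat) :
  i + size G < n -> lam G i = nth 0 (elems_below G n) i.
Proof.
move=> lt_n; rewrite /lam -/(elems_below G _) (elems_below_cat G lt_n) nth_cat.
by have := size_elems_below G (i + size G).+1; case: ltnP => //; lia.
Qed.

Lemma lam_notin (G : seq nat) (i : nat) : lam G i \notin G.
Proof.
set n := (i + size G).+1.
have i_lt : i < size (elems_below G n) by have := size_elems_below G n; lia.
have := mem_nth 0 i_lt.
by rewrite -(@lamE G i n) // mem_filter => /andP[].
Qed.

Lemma lam_homo (G : seq nat) : {homo lam G : i j / i < j}.
Proof.
move=> i j lt_ij; set n := (j + size G).+1.
rewrite (@lamE G i n) ?(@lamE G j n); try lia.
have := size_elems_below G n.
have sorted_n : sorted ltn (elems_below G n).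
  exact/(sorted_filter ltn_trans)/iota_ltn_sorted.
by move=> size_ge; apply: (sorted_ltn_nth ltn_trans) => //; rewrite inE; lia.
Qed.

Lemma lam_le (G : seq nat) : {mono lam G : i j / i <= j}.
Proof. exact/leq_mono/lam_homo. Qed.

Lemma lam_lt (G : seq nat) : {mono lam G : i j / i < j}.
Proof. exact/leqW_mono/lam_le. Qed.

Lemma lam_inj (G : seq nat) : injective (lam G).
Proof. exact/incn_inj/lam_le. Qed.

Lemma lam_surj (G : seq nat) (y : nat) : y \notin G -> exists j, lam G j = y.
Proof.
move=> yG; set j := index y (elems_below G y.+1).
have y_in : y \in elems_below G y.+1 by rewrite mem_filter yG mem_iota add0n ltnSn.
exists j; rewrite (@lamE G j (y.+1 + (j + size G).+1)); last lia.
rewrite (@elems_below_cat G y.+1); last lia.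
by rewrite nth_cat index_mem y_in nth_index.
Qed.

Lemma lam_rangeP (G : seq nat) (y : nat) : (exists j, lam G j = y) <-> y \notin G.
Proof. by split=> [[j <-]|]; [apply: lam_notin | apply: lam_surj]. Qed.

Lemma lam0 (G : seq nat) : 0 \notin G -> lam G 0 = 0.
Proof.
move=> /lam_surj[[|j] // lam_j0].
by have := lam_homo G (ltn0Sn j); rewrite lam_j0.
Qed.

Lemma eq_homo_ltn_range (f h : nat -> nat) :
  {homo f : i j / i < j} -> {homo h : i j / i < j} ->
  (forall y, (exists j, f j = y) <-> (exists j, h j = y)) -> f =1 h.
Proof.
move=> /leq_mono f_le /leq_mono h_le same_range; elim/ltn_ind => i IH.
have [a fa] : exists a, f a = h i by apply/same_range; exists i.
have [b hb] : exists b, h b = f i by apply/same_range; exists i.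
have i_le_a : i <= a.
  rewrite leqNgt; apply/negP => lt_ai; move: (lt_ai).
  by rewrite -(leqW_mono h_le) -IH // fa ltnn.
have i_le_b : i <= b.
  rewrite leqNgt; apply/negP => lt_bi; move: (lt_bi).
  by rewrite -(leqW_mono f_le) IH // hb ltnn.
by apply/eqP; rewrite eqn_leq -{1}fa -{2}hb f_le h_le i_le_a i_le_b.
Qed.

Lemma lam_cons (G : seq nat) (s j : nat) : lam (lam G s :: G) j = lam G (bump s j).
Proof.
move: j; apply: (@eq_homo_ltn_range _ (lam G \o bump s) (lam_homo _)).
  by move=> a b lt_ab /=; rewrite lam_lt /bump; case: leqP; case: leqP; lia.
move=> y /=.
rewrite lam_rangeP in_cons negb_or; split=> [/andP[ys /lam_surj[m lam_m]]|[j' <-]].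
  have ms : s != m by apply: contraNneq ys => ->; rewrite lam_m.
  by exists (unbump s m); rewrite unbumpK // inE eq_sym.
by rewrite lam_notin andbT (inj_eq (@lam_inj G)) eq_sym neq_bump.
Qed.

Lemma genus_cons (G : seq nat) (a : nat) : a \notin G -> genus (a :: G) = (genus G).+1.
Proof. by move=> aG; rewrite /genus /= (negbTE aG). Qed.

Definition decomposable (G : seq nat) (i x : nat) : Prop :=
  exists a b, [/\ i < a, i < b & lam G a + lam G b = x].

Definition decomposable_avoiding (G : seq nat) (s i x : nat) : Prop :=
  exists a b, [/\ i < a, i < b, a <> s, b <> s & lam G a + lam G b = x].

Lemma Lam_i_nonzeroP (G : seq nat) (i y : nat) : 0 \notin G ->
  (Lam_i G i y /\ y <> 0) <-> exists2 j, i < j & y = lam G j.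
Proof.
move=> G0; split=> [[[yG not_low] y0]|[j lt_ij ->]].
  have [[|m] lam_m] := lam_surj yG; first by case: y0; rewrite -lam_m lam0.
  exists m.+1 => //; rewrite ltnNge; apply/negP => le_mi.
  by apply: (not_low m.+1).
split; first split.
- exact: lam_notin.
- by move=> j' /andP[_ le_ji] /lam_inj; lia.
- by have := lam_homo G (leq_ltn_trans (leq0n i) lt_ij); rewrite lam0 //; lia.
Qed.

Lemma generator_Lam_iE (G : seq nat) (i m : nat) : 0 \notin G -> i < m ->
  generator (Lam_i G i) (lam G m) <-> ~ decomposable G i (lam G m).
Proof.
move=> G0 lt_im.
have elem j : i < j -> Lam_i G i (lam G j) /\ lam G j <> 0.
  by move=> lt_ij; apply/Lam_i_nonzeroP => //; exists j.
split=> [[_ [_ not_sum]] [a [b [lt_ia lt_ib sum_ab]]]|not_dec].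
  have [Pa a0] := elem a lt_ia; have [Pb b0] := elem b lt_ib.
  by apply: not_sum; exists (lam G a), (lam G b).
have [Pm m0] := elem m lt_im; split=> //; split=> //.
move=> [y [z [Py [Pz [y0 [z0 sum_yz]]]]]].
case/(Lam_i_nonzeroP _ _ G0): (conj Py y0) => a lt_ia lam_a.
case/(Lam_i_nonzeroP _ _ G0): (conj Pz z0) => b lt_ib lam_b.
by apply: not_dec; exists a, b; rewrite -lam_a -lam_b.
Qed.

Lemma seedE (G : seq nat) (k i u : nat) : 0 \notin G ->
  (forall j, k <= j -> lam G j = j + genus G) -> k <= u -> i < u ->
  seed G k i (lam G u) <-> ~ decomposable G i (lam G u + lam G i).
Proof.
move=> G0 lamK le_ku lt_iu.
have [m sum_m lt_im] : exists2 m, lam G u + lam G i = lam G m & i < m.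
  by exists (u + lam G i); rewrite ?(lamK u) ?(lamK (u + lam G i)); lia.
rewrite sum_m -generator_Lam_iE //.
split=> [[u' [_ [_]]]|gen]; first by rewrite sum_m.
by exists u; split=> //; split=> //; rewrite sum_m.
Qed.

Lemma decomposable_cons (G : seq nat) (s i x : nat) : i < s ->
  decomposable (lam G s :: G) i x <-> decomposable_avoiding G s i x.
Proof.
move=> lt_is.
have bump_gt j : (i < bump s j) = (i < j) by rewrite /bump; case: leqP; lia.
have bump_neq j : bump s j <> s by apply/eqP; rewrite eq_sym neq_bump.
have bump_unbump j : j <> s -> bump s (unbump s j) = j.
  by move=> /eqP j_s; rewrite unbumpK // inE.
split=> [[a [b [lt_ia lt_ib]]]|[a [b [lt_ia lt_ib a_s b_s]]]].
  by rewrite !lam_cons => sum_ab; exists (bump s a), (bump s b); rewrite !bump_gt.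
move=> sum_ab; exists (unbump s a), (unbump s b).
by rewrite -(bump_gt (unbump s a)) -(bump_gt (unbump s b)) !lam_cons !bump_unbump.
Qed.

Lemma seed_consE (G : seq nat) (k s kt i t : nat) : 0 \notin G ->
  (forall j, k <= j -> lam G j = j + genus G) -> is_kidx (lam G s :: G) kt ->
  k <= s -> i < s -> s < t ->
  seed (lam G s :: G) kt i (lam G t) <->
  ~ decomposable_avoiding G s i (lam G t + lam G i).
Proof.
move=> G0 lamK [lamKt kt_min] le_ks lt_is lt_st.
have le_kts : kt <= s.
  apply: kt_min => j le_sj.
  by rewrite lam_cons genus_cons ?lam_notin // /bump le_sj lamK //; lia.
have Gt0 : 0 \notin lam G s :: G.
  rewrite in_cons negb_or G0 andbT.
  by have := lam_homo G (leq_ltn_trans (leq0n i) lt_is); rewrite lam0 //; lia.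
have lam_t : lam (lam G s :: G) t.-1 = lam G t.
  by rewrite lam_cons /bump; case: leqP => s_t1; congr lam; lia.
have lam_i : lam (lam G s :: G) i = lam G i.
  by rewrite lam_cons /bump leqNgt lt_is.
rewrite -lam_t; apply: iff_trans (seedE Gt0 lamKt _ _) _; try lia.
by rewrite lam_t lam_i; split; apply: contra_not => /decomposable_cons; apply.
Qed.

Section RemovingASeed.
Variables (G : seq nat) (k s i t : nat).
Hypothesis G0 : 0 \notin G.
Hypothesis lamK : forall j, k <= j -> lam G j = j + genus G.
Hypotheses (lt_ik : i < k) (le_ks : k <= s) (lt_st : s < t).

Let x := lam G t + lam G i.
Let cond1 := seed G k i (lam G t).
Let cond2 := i < k.-1 /\ lam G t = lam G s + lam G i.+1 - lam G i /\
             seed G k i.+1 (lam G s).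
Let cond3 := i.+1 = k /\ k.+1 = s /\ lam G t = lam G s + lam G k - lam G k.-1.
Let cond4 := i.+1 = k /\ k = s /\
             (lam G t = lam G s + lam G k - lam G k.-1 \/
              lam G t = lam G s + lam G k - lam G k.-1 + 1).

Lemma cond1E : cond1 <-> ~ decomposable G i x.
Proof. by apply: seedE => //; lia. Qed.

Lemma cond2_seedE : i < k.-1 ->
  seed G k i.+1 (lam G s) <-> ~ decomposable G i.+1 (lam G s + lam G i.+1).
Proof. by move=> lt_ik1; apply: seedE => //; lia. Qed.

Lemma decomposable_through_s :
  ~ decomposable_avoiding G s i x -> decomposable G i x ->
  exists2 c, i < c & lam G s + lam G c = x.
Proof.
move=> not_avoid [a [b [lt_ia lt_ib sum_ab]]].
have [<-|a_s] := eqVneq a s; first by exists b.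
have [<-|b_s] := eqVneq b s; first by exists a; rewrite // addnC.
by case: not_avoid; exists a, b; split=> //; apply/eqP.
Qed.

(* Above the conductor, lam a + lam b only depends on a + b. *)
Lemma avoiding_of_shift (a b : nat) : k <= a -> a.+1 < b -> (a = s \/ b = s) ->
  i < a -> lam G a + lam G b = x -> decomposable_avoiding G s i x.
Proof.
move=> le_ka lt_a1b a_b_s lt_ia sum_ab.
have := lamK (j := a) _; have := lamK (j := a.+1) _.
have := lamK (j := b) _; have := lamK (j := b.-1) _.
by exists a.+1, b.-1; split; lia.
Qed.

Lemma avoiding_of_far (c : nat) : i.+1 <> s -> i.+1 < c ->
  lam G s + lam G c = x -> decomposable_avoiding G s i x.
Proof.
move=> i1_s lt_i1c sum_c.
have := lamK le_ks; have := lam_homo G lt_i1c => lt_lam_c lam_s.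
have lam_m := lamK (j := lam G s + lam G c - lam G i.+1 - genus G) _.
by exists i.+1, (lam G s + lam G c - lam G i.+1 - genus G); split; lia.
Qed.

Lemma not_decomposable_next : ~ decomposable_avoiding G s i x ->
  lam G s + lam G i.+1 = x -> ~ decomposable G i.+1 (lam G s + lam G i.+1).
Proof.
move=> not_avoid sum_next [a [b [lt_ia lt_ib sum_ab]]]; apply: not_avoid.
have not_s j l : i.+1 < l -> lam G j + lam G l = lam G s + lam G i.+1 -> j <> s.
  by move=> lt_l sum_jl j_s; move: sum_jl; rewrite j_s => /addnI /lam_inj; lia.
exists a, b; split; try lia; first exact: not_s sum_ab.
by apply: (not_s b a) => //; rewrite addnC.
Qed.

Lemma cases_of_next : ~ decomposable_avoiding G s i x ->
  lam G s + lam G i.+1 = x -> cond2 \/ cond3 \/ cond4.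
Proof.
move=> not_avoid sum_next.
have lam_t : lam G t = lam G s + lam G i.+1 - lam G i.
  by have := lam_homo G (ltnSn i); rewrite /x in sum_next; lia.
have [lt_i1k|eq_i1k] : i.+1 < k \/ i.+1 = k by lia.
  left; split; first lia; split=> //.
  by apply/cond2_seedE; [lia | exact: not_decomposable_next].
right; rewrite /cond3 /cond4 -eq_i1k /=.
have [lt_si2|gt_si2|s_i2] := ltngtP s i.+2.
- by right; split=> //; split; [lia | left].
- case: not_avoid; apply: (avoiding_of_shift (a := i.+1) (b := s)) => //.
  + by rewrite eq_i1k.
  + by right.
  + by rewrite addnC.
- by left; split=> //; split.
Qed.

Lemma cases_of_far (c : nat) : ~ decomposable_avoiding G s i x -> i.+1 < c ->
  lam G s + lam G c = x -> cond4.
Proof.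
move=> not_avoid lt_i1c sum_c.
have [i1_s|i1_s] := eqVneq i.+1 s; last first.
  by case: not_avoid; apply: (avoiding_of_far (c := c)) => //; apply/eqP.
have [lt_cs1|gt_cs1|c_s1] := ltngtP c s.+1; first lia.
  by case: not_avoid; apply: (avoiding_of_shift (a := s) (b := c)) => //; lia.
have := lamK le_ks; have := lamK (j := s.+1) _; have := lam_homo G lt_ik.
have k1_i : k.-1 = i by lia.
have k_s : k = s by lia.
rewrite /cond4 /x k1_i k_s -c_s1 in sum_c *.
by split=> //; split=> //; right; lia.
Qed.

Lemma cases_of_not_avoiding : ~ decomposable_avoiding G s i x ->
  cond1 \/ cond2 \/ cond3 \/ cond4.
Proof.
move=> not_avoid.
have [dec|not_dec] := classic (decomposable G i x); last by left; apply/cond1E.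
have [c lt_ic sum_c] := decomposable_through_s not_avoid dec.
right; have [lt_i1c|eq_i1c] : i.+1 < c \/ i.+1 = c by lia.
  by right; right; exact: cases_of_far sum_c.
by apply: cases_of_next; rewrite // eq_i1c.
Qed.

Lemma not_avoiding_of_cases : cond1 \/ cond2 \/ cond3 \/ cond4 ->
  ~ decomposable_avoiding G s i x.
Proof.
move=> conds [a [b [lt_ia lt_ib a_s b_s sum_ab]]].
have lt_lam_i1 := lam_homo G (ltnSn i).
case: conds => [/cond1E|[[lt_ik1 [lam_t /(cond2_seedE lt_ik1)]]|conds]].
- by apply; exists a, b.
- apply; exists a, b; split=> //; rewrite /x in sum_ab.
  + rewrite ltn_neqAle lt_ia andbT; apply/eqP => a_i1.
    by apply: b_s; apply: (@lam_inj G); rewrite -a_i1 in sum_ab; lia.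
  + rewrite ltn_neqAle lt_ib andbT; apply/eqP => b_i1.
    by apply: a_s; apply: (@lam_inj G); rewrite -b_i1 in sum_ab; lia.
  + lia.
have eq_i1k : i.+1 = k by case: conds => [[]|[]].
have := lamK (j := a) _; have := lamK (j := b) _; have := lamK le_ks.
have := lamK (leqnn k); have := lam_homo G lt_ik.
have k1_i : k.-1 = i by lia.
case: conds => [[_ [eq_s lam_t]]|[_ [eq_s [lam_t|lam_t]]]];
  by rewrite k1_i /x in lam_t sum_ab; lia.
Qed.

Lemma cond_decomposable : cond2 \/ cond3 \/ cond4 -> decomposable G i x.
Proof.
have lt_lam_i1 := lam_homo G (ltnSn i).
case=> [[_ [lam_t _]]|conds]; first by exists s, i.+1; split; rewrite /x; lia.
have eq_i1k : i.+1 = k by case: conds => [[]|[]].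
have := lamK le_ks; have := lamK (j := s.+1) _.
move: conds; rewrite /cond3 /cond4 -eq_i1k /=.
case=> [[_ [_ lam_t]]|[_ [eq_s [lam_t|lam_t]]]].
1,2: by exists s, i.+1; split; rewrite /x; lia.
by rewrite eq_s in lam_t lt_lam_i1; exists s, s.+1; split; rewrite /x; lia.
Qed.

End RemovingASeed.

Theorem lemma2 (G : seq nat) (k s kt i t : nat) :
  numsg G -> is_kidx G k ->
  k <= s -> seed G k 0 (lam G s) ->
  is_kidx (lam G s :: G) kt ->
  i < k -> s < t ->
  let Gt := lam G s :: G in
  let C1 := seed G k i (lam G t) in
  let C2 := i < k.-1 /\ lam G t = lam G s + lam G i.+1 - lam G i /\
            seed G k i.+1 (lam G s) in
  let C3 := i.+1 = k /\ k.+1 = s /\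
            lam G t = lam G s + lam G k - lam G k.-1 in
  let C4 := i.+1 = k /\ k = s /\
            (lam G t = lam G s + lam G k - lam G k.-1 \/
             lam G t = lam G s + lam G k - lam G k.-1 + 1) in
  (seed Gt kt i (lam G t) <-> C1 \/ C2 \/ C3 \/ C4) /\
  ~ (C1 /\ C2) /\ ~ (C1 /\ C3) /\ ~ (C1 /\ C4) /\
  ~ (C2 /\ C3) /\ ~ (C2 /\ C4) /\ ~ (C3 /\ C4).
Proof.
move=> [G0 _] [lamK _] le_ks _ kidx_t lt_ik lt_st Gt C1 C2 C3 C4.
have seedT := seed_consE G0 lamK kidx_t le_ks (leq_trans lt_ik le_ks) lt_st.
have cases := cases_of_not_avoiding G0 lamK lt_ik le_ks lt_st.
have not_avoid := not_avoiding_of_cases G0 lamK lt_ik le_ks lt_st.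
have C1E : C1 <-> ~ decomposable G i (lam G t + lam G i).
  exact: cond1E G0 lamK lt_ik le_ks lt_st.
have dec := cond_decomposable G0 lamK lt_ik le_ks lt_st.
split; first by split=> [/seedT/cases | /not_avoid/seedT].
split; first by move=> [/C1E + C2t]; apply; apply: dec; left.
split; first by move=> [/C1E + C3t]; apply; apply: dec; right; left.
split; first by move=> [/C1E + C4t]; apply; apply: dec; right; right.
split; first by move=> [[lt_ik1 _] [eq_i1k _]]; lia.
split; first by move=> [[lt_ik1 _] [eq_i1k _]]; lia.
by move=> [[_ [eq_k1s _]] [_ [eq_ks _]]]; lia.
Qed.
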